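(* Let $q$ be a prime number and $l$ a positive integer. Then $\dfrac{-1}{q^{s-1}}\in\mathbb{Q}\text{-}\mathcal{KS}(q^{l})$ for every positive integer $s$ dividing $l-1$ such that $\dfrac{l-1}{s}$ is even.
   Context: Every nonzero rational $\alpha$ is written $\alpha=\alpha_1/\alpha_2$ with $\alpha_1\in\mathbb{Z}$, $\alpha_2$ a positive integer and $\gcd(\alpha_1,\alpha_2)=1$. For an integer $N\ge 2$ and a nonzero rational $\alpha=\alpha_1/\alpha_2$, $N$ is called an $\alpha$-Korselt number if $N\neq\alpha$ and $\alpha_2p-\alpha_1$ divides $\alpha_2N-\alpha_1$ (in $\mathbb{Z}$) for every prime divisor $p$ of $N$. $\mathbb{Q}\text{-}\mathcal{KS}(N)$ is the set of all $\beta\in\mathbb{Q}\setminus\{0,N\}$ such that $N$ is a $\beta$-Korselt number. *)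

From mathcomp Require Import all_boot all_order all_algebra.
Set Implicit Arguments. Unset Strict Implicit. Unset Printing Implicit Defensive.
Import Order.TTheory GRing.Theory Num.Theory.
Local Open Scope ring_scope.

(* alpha = alpha1 / alpha2 with alpha1 = numq alpha, alpha2 = denq alpha > 0,
   coprime (reduced form, as produced by mathcomp's rat). *)
Definition alpha_Korselt (alpha : rat) (N : nat) : Prop :=
  (2 <= N)%N /\ (N%:R : rat) != alpha /\
  forall p : nat, prime p -> (p %| N)%N ->
    (denq alpha * p%:Z - numq alpha %| denq alpha * N%:Z - numq alpha)%Z.

Definition QKS (N : nat) (beta : rat) : Prop :=
  beta != 0 /\ beta != (N%:R : rat) /\ alpha_Korselt beta N.

From mathcomp Require Import all_boot all_order all_algebra.
Import Order.TTheory GRing.Theory Num.Theory.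
Local Open Scope ring_scope.

(* For beta = -1/q^(s-1) one has beta2 * q - beta1 = q^s + 1, and with
   l - 1 = s k also beta2 * q^l - beta1 = (q^s)^(k+1) + 1.  As k + 1 is odd,
   x + 1 divides x^(k+1) + 1, and q is the only prime divisor of q^l. *)

Lemma dvdz_addX_odd (x : int) (n : nat) : odd n -> (x + 1 %| x ^+ n + 1)%Z.
Proof.
move=> odd_n.
have -> : x ^+ n + 1 = x ^+ n - (-1) ^+ n by rewrite -signr_odd odd_n expr1 opprK.
by rewrite subrXX opprK dvdz_mulr.
Qed.

Lemma numq_Nrecipn (m : nat) : (0 < m)%N -> numq (- 1 / (m%:R : rat)) = -1.
Proof.
move=> m_gt0; have -> : - 1 / (m%:R : rat) = (-1 : int)%:~R / (m%:Z)%:~R.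
  by rewrite rmorphN1.
by rewrite coprimeq_num ?gtr0_sg ?mul1r ?ltz_nat //= /coprime gcd1n.
Qed.

Lemma denq_Nrecipn (m : nat) : (0 < m)%N -> denq (- 1 / (m%:R : rat)) = m%:Z.
Proof.
move=> m_gt0; have -> : - 1 / (m%:R : rat) = (-1 : int)%:~R / (m%:Z)%:~R.
  by rewrite rmorphN1.
by rewrite coprimeq_den ?gt_eqF ?ltz_nat //= /coprime gcd1n.
Qed.

Lemma alpha_Korselt_prime_power (alpha : rat) (q l : nat) :
    prime q -> (0 < l)%N -> ((q ^ l)%:R : rat) != alpha ->
    (denq alpha * q%:Z - numq alpha %| denq alpha * (q ^ l)%:Z - numq alpha)%Z ->
  alpha_Korselt alpha (q ^ l).
Proof.
move=> q_pr l_gt0 N_neq_alpha dvd_q; split; last split=> // p p_pr.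
  apply: leq_trans (prime_gt1 q_pr) _.
  by rewrite -{1}(expn1 q) leq_pexp2l // prime_gt0.
by rewrite Euclid_dvdX // => /andP[]; rewrite dvdn_prime2 // => /eqP ->.
Qed.

Lemma QKS_lt0 (N : nat) (beta : rat) :
  beta < 0 -> alpha_Korselt beta N -> QKS N beta.
Proof.
move=> beta_lt0 KS; split; first by rewrite ltr0_neq0.
by split=> //; rewrite lt_eqF // (lt_le_trans beta_lt0).
Qed.

Lemma expn_pred_mulnSr (q l s : nat) : (0 < l)%N -> (0 < s)%N -> (s %| l.-1)%N ->
  (q ^ s.-1 * q ^ l = (q ^ s) ^ (l.-1 %/ s).+1)%N.
Proof.
move=> l_gt0 s_gt0 /divnK; rewrite -expnD -expnM mulnS mulnC => ->.
by rewrite -(prednK s_gt0) -{1}(prednK l_gt0) addnS addSn.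
Qed.

Theorem proposition5p2 (q l : nat) :
  prime q -> (0 < l)%N ->
  forall s : nat, (0 < s)%N -> (s %| l.-1)%N -> ~~ odd (l.-1 %/ s) ->
    QKS (q ^ l) (- 1 / ((q ^ s.-1)%:R : rat)).
Proof.
move=> q_pr l_gt0 s s_gt0 s_dvd even_quo.
have m_gt0 : (0 < q ^ s.-1)%N by rewrite expn_gt0 prime_gt0.
have beta_lt0 : - 1 / ((q ^ s.-1)%:R : rat) < 0.
  by rewrite mulN1r oppr_lt0 invr_gt0 ltr0n.
apply: QKS_lt0 => //; apply: alpha_Korselt_prime_power => //.
  by rewrite gt_eqF // (lt_le_trans beta_lt0).
rewrite numq_Nrecipn // denq_Nrecipn // opprK -!PoszM -expnSr prednK //.
by rewrite expn_pred_mulnSr // -natz natrX natz dvdz_addX_odd /= ?even_quo.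
Qed.
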